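(* Let $X,Y$ be $\mathbb{Q}$-vector spaces and let $f:X\to Y$. Suppose $X$ carries a topology $\tau_X$ such that every neighborhood of the origin is naturally absorbent. Let $B$ be a neighborhood of the origin and $s\ge1$. If $\Delta_{h_1h_2\cdots h_s}f(x)=0$ for all $x\in X$ and all $h_1,\dots,h_s\in B$, then $\Delta_{h_1h_2\cdots h_s}f(x)=0$ for all $(x,h_1,\dots,h_s)\in X^{s+1}$.
   Context: A set $B\subseteq X$ is called naturally absorbent if for each $x\in X$ there exists $k\in\mathbb{N}$ with $x\in kB=\{kz:z\in B\}$. For $h\in X$, $\Delta_hf(x)=f(x+h)-f(x)$ and $\Delta_{h_1h_2\cdots h_s}f(x)=\Delta_{h_1}\left(\Delta_{h_2\cdots h_s}f\right)(x)$ for $s\ge 2$. *)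

From HB Require Import structures.
From mathcomp Require Import all_boot all_order all_algebra.
Set Implicit Arguments. Unset Strict Implicit. Unset Printing Implicit Defensive.
Import Order.TTheory GRing.Theory Num.Theory.
Local Open Scope ring_scope.

Definition is_topology (X : Type) (open : (X -> Prop) -> Prop) : Prop :=
  [/\ open (fun _ => False),
      open (fun _ => True),
      (forall U V, open U -> open V -> open (fun x => U x /\ V x))
    & (forall (I : Type) (F : I -> X -> Prop),
         (forall i, open (F i)) -> open (fun x => exists i, F i x))].

Definition nbhd (X : Type) (open : (X -> Prop) -> Prop) (x : X) (N : X -> Prop) :=
  exists U, [/\ open U, U x & forall y, U y -> N y].

Definition naturally_absorbent (X : lmodType rat) (B : X -> Prop) : Prop :=
  forall x : X, exists k : nat, (0 < k)%N /\ exists z, B z /\ x = k%:R *: z.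

Definition delta (X Y : zmodType) (h : X) (f : X -> Y) : X -> Y :=
  fun x => f (x + h) - f x.

Fixpoint deltas (X Y : zmodType) (hs : seq X) (f : X -> Y) : X -> Y :=
  match hs with
  | [::] => f
  | h :: hs' => delta h (deltas hs' f)
  end.

(* The operators Delta_h commute, so Delta_{h_1 ... h_s} may be peeled one
   direction at a time.  If Delta_z g vanishes identically then so does
   Delta_{kz} g, by telescoping along z, z+z, ..., kz; and since B is
   naturally absorbent every direction h is such a multiple kz with z in B.
   Replacing the directions h_1, ..., h_s one by one by elements of B
   therefore reduces the claim to the hypothesis. *)

From mathcomp Require Import all_boot all_order all_algebra.
Set Implicit Arguments.
Unset Strict Implicit.
Import GRing.Theory.
Local Open Scope ring_scope.

Section Differences.

Variables X Y : zmodType.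

Lemma deltaC (h t : X) (g : X -> Y) x :
  delta h (delta t g) x = delta t (delta h g) x.
Proof.
rewrite /delta (addrAC x h t) addrAC !opprB.
by rewrite -!addrA; congr (_ + _); rewrite addrCA [RHS]addrCA (addrC (- _)).
Qed.

Lemma deltas_delta (h : X) (g : X -> Y) (hs : seq X) x :
  deltas hs (delta h g) x = delta h (deltas hs g) x.
Proof.
elim: hs x => [|t ts IH] x //=.
by rewrite /delta !IH -/(delta _ _ _) -/(delta _ _ _) deltaC.
Qed.

Lemma delta_muln_eq0 (z : X) (g : X -> Y) :
  (forall y, delta z g y = 0) -> forall k y, delta (z *+ k) g y = 0.
Proof.
move=> gz; elim=> [|k IH] y; first by rewrite /delta mulr0n addr0 subrr.
have /eqP := gz (y + z *+ k); rewrite /delta subr_eq0 => /eqP step.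
by rewrite mulrSr addrA step; apply: IH.
Qed.

Lemma deltas_eq0_absorbent (B : X -> Prop)
    (absB : forall h : X, exists k (z : X), B z /\ h = z *+ k)
    (hs : seq X) (g : X -> Y) :
  (forall x ts, size ts = size hs -> (forall h, h \in ts -> B h) ->
     deltas ts g x = 0) ->
  forall x, deltas hs g x = 0.
Proof.
elim: hs g => [|h hs IH] g gB x; first exact: (gB x [::]).
rewrite /= -deltas_delta; apply: IH => y ts size_ts ts_B.
have [k [z [Bz ->]]] := absB h.
rewrite deltas_delta; apply: delta_muln_eq0 => w.
apply: (gB w (z :: ts)); first by rewrite /= size_ts.
by move=> u; rewrite inE => /orP [/eqP -> //|]; apply: ts_B.
Qed.

End Differences.

Theorem theorem4 (X Y : lmodType rat) (f : X -> Y)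
  (open : (X -> Prop) -> Prop) (Htop : is_topology open)
  (Habs : forall N, nbhd open 0 N -> naturally_absorbent N)
  (B : X -> Prop) (HB : nbhd open 0 B) (s : nat) (Hs : (1 <= s)%N)
  (Hvan : forall (x : X) (hs : seq X),
      size hs = s -> (forall h, h \in hs -> B h) -> deltas hs f x = 0) :
  forall (x : X) (hs : seq X), size hs = s -> deltas hs f x = 0.
Proof.
move=> x hs size_hs.
have absB : forall h : X, exists k (z : X), B z /\ h = z *+ k.
  move=> h; have [k [_ [z [Bz ->]]]] := Habs B HB h.
  by exists k, z; rewrite scaler_nat.
apply: (deltas_eq0_absorbent absB) => y ts size_ts ts_B.
by apply: Hvan => //; rewrite size_ts.
Qed.
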